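(* With $f$ as in the context (and $n\ge 3$), $U=\{x\in V : xf\in v_0\wedge V\}$, and every $g\in G$ satisfies $Ug=U$.
   Context: Let $p$ be a prime, $\mathbb{F}=\mathrm{GF}(p)$, and $n\ge 3$. Let $V$ be an $\mathbb{F}$-vector space with basis $v_0,\dots,v_n$, $U=\langle v_1,\dots,v_n\rangle$, $W=\Lambda^2V$, and $v_0\wedge V=\{v_0\wedge y:y\in V\}$. Maps are written on the right. For $g\in\mathrm{End}(V)$, $\widehat g$ denotes the induced linear map of $W$, $(x\wedge y)\widehat g=(xg)\wedge(yg)$. The linear map $f:V\to W$ is given by $v_0f=\sum_{i=1}^n b_i\, v_0\wedge v_i+\sum_{1\le j<k\le n}c_{j,k}\, v_j\wedge v_k$ and $v_if=\sum_{j=1}^n A_{i,j}\, v_0\wedge v_j$ for $1\le i\le n$, where $b\in\mathbb{F}^n$ and $c=(c_{j,k})\in\mathbb{F}^{\binom n2}$ are nonzero, and $A$ is the $n\times n$ companion matrix of the minimal polynomial over $\mathbb{F}$ of a primitive element of $\mathrm{GF}(p^n)$. Let $G=\{g\in \mathrm{GL}(V) : (vg)f=(vf)\widehat{g}\ \text{for all } v\in V\}$. *)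

From HB Require Import structures.
From mathcomp Require Import all_boot all_order all_algebra all_fingroup all_field.
Set Implicit Arguments. Unset Strict Implicit. Unset Printing Implicit Defensive.
Import GRing.Theory.
Local Open Scope ring_scope.

(* V = F^(n+1) as row vectors 'rV_(n.+1); basis vector v_i = ebas i.
   v_0 is index ord0, v_i (1 <= i <= n) is index lift ord0 (i-1).
   W = Lambda^2 V is modelled by the space of alternating (n+1)x(n+1)
   matrices, via  x /\ y  :=  x^T y - y^T x  (standard isomorphism). *)

Definition ebas {F : fieldType} {m : nat} (i : 'I_m) : 'rV[F]_m := delta_mx 0 i.

Definition wedge {F : fieldType} {m : nat} (x y : 'rV[F]_m) : 'M[F]_m :=
  x^T *m y - y^T *m x.

(* induced map  g^ : W -> W,  (x /\ y) g^ = (xg) /\ (yg) *)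
Definition hat {F : fieldType} {m : nat} (g : 'M[F]_m) (w : 'M[F]_m) : 'M[F]_m :=
  g^T *m w *m g.

Definition fbasis {F : fieldType} {n : nat} (b : 'rV[F]_n) (c A : 'M[F]_n)
  (i : 'I_n.+1) : 'M[F]_n.+1 :=
  match unlift ord0 i with
  | None =>
      \sum_(j < n) b 0 j *: wedge (ebas ord0) (ebas (lift ord0 j))
    + \sum_(j < n) \sum_(k < n | (j < k)%N)
          c j k *: wedge (ebas (lift ord0 j)) (ebas (lift ord0 k))
  | Some i' => \sum_(j < n) A i' j *: wedge (ebas ord0) (ebas (lift ord0 j))
  end.

Definition fmap {F : fieldType} {n : nat} (b : 'rV[F]_n) (c A : 'M[F]_n)
  (x : 'rV[F]_n.+1) : 'M[F]_n.+1 :=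
  \sum_(i < n.+1) x 0 i *: fbasis b c A i.

Definition inU {F : fieldType} {n : nat} (x : 'rV[F]_n.+1) : Prop :=
  (x <= \matrix_(i < n) ebas (lift ord0 i))%MS.

Definition in_v0V {F : fieldType} {n : nat} (w : 'M[F]_n.+1) : Prop :=
  exists y : 'rV[F]_n.+1, w = wedge (ebas ord0) y.

Definition inG {F : fieldType} {n : nat} (b : 'rV[F]_n) (c A : 'M[F]_n)
  (g : 'M[F]_n.+1) : Prop :=
  g \in unitmx /\
  forall v : 'rV[F]_n.+1, fmap b c A (v *m g) = hat g (fmap b c A v).

From HB Require Import structures.
From mathcomp Require Import all_boot all_order all_algebra all_fingroup all_field.
From mathcomp Require Import zify ring.
Set Implicit Arguments. Unset Strict Implicit. Unset Printing Implicit Defensive.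
Import GRing.Theory.
Local Open Scope ring_scope.

(* A vector x lies in U iff its v_0-coordinate x_0 vanishes, and on U the map f
   is x |-> v_0 /\ xA.  Whether xf lies in v_0 /\ V is decided by its
   U /\ U-component, which is x_0 times that of v_0 f, namely x_0 c; as c is
   nonzero this gives the first claim.  For g in G it suffices to show that v_0 g
   is a multiple of v_0: then (xg)f = (v_0 g) /\ (xAg) lies in v_0 /\ V for x in
   U, so xg is in U.  Otherwise, for u in the subspace of U of codimension at
   most 1 that g maps into U, the U /\ U-component of (ug)f = (v_0 g) /\ (uAg)
   vanishes; this forces uAg into the span of v_0 and v_0 g, i.e. uA into the
   line spanned by the U-part of v_0 g^-1.  As A is invertible (the constant
   term of a minimal polynomial of degree at least 2 is nonzero), n - 1 <= 1. *)

Section Wedge.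
Variables (F : fieldType) (m : nat).
Implicit Types (x y : 'rV[F]_m) (g : 'M[F]_m).

Lemma ebasE (i j : 'I_m) : (ebas i : 'rV[F]_m) 0 j = (i == j)%:R.
Proof. by rewrite mxE eqxx eq_sym. Qed.

Lemma wedgeE x y r s : wedge x y r s = x 0 r * y 0 s - y 0 r * x 0 s.
Proof. by rewrite !mxE !big_ord1 !mxE. Qed.

Lemma wedgeZr a x y : wedge x (a *: y) = a *: wedge x y.
Proof. by rewrite /wedge !linearZ /= -scalemxAl scalerBr. Qed.

Lemma wedgeZl a x y : wedge (a *: x) y = wedge x (a *: y).
Proof. by apply/matrixP => r s; rewrite !wedgeE !mxE; ring. Qed.

Lemma wedge_sumr (I : Type) (r : seq I) (P : pred I) x (y : I -> 'rV[F]_m) :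
  wedge x (\sum_(i <- r | P i) y i) = \sum_(i <- r | P i) wedge x (y i).
Proof. by rewrite /wedge mulmx_sumr linear_sum mulmx_suml -sumrB. Qed.

Lemma hat_wedge g x y : hat g (wedge x y) = wedge (x *m g) (y *m g).
Proof. by rewrite /hat /wedge mulmxBr mulmxBl !trmx_mul !mulmxA. Qed.

End Wedge.

Lemma mx_neq0_entry (R : pzSemiRingType) m1 m2 (M : 'M[R]_(m1, m2)) :
  M != 0 -> exists i j, M i j != 0.
Proof.
move=> M_neq0.
have /existsP[[i j] /= Mij] : [exists ij : 'I_m1 * 'I_m2, M ij.1 ij.2 != 0].
  apply: contraNT M_neq0 => /existsPn M0.
  by apply/eqP/matrixP => i j; rewrite mxE; apply/eqP/negbNE/(M0 (i, j)).
by exists i, j.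
Qed.

Lemma sum_delta (R : pzSemiRingType) m (G : 'I_m -> R) k :
  \sum_(j < m) G j * (j == k)%:R = G k.
Proof.
by rewrite (bigD1 k) //= eqxx mulr1 big1 ?addr0 // => j /negbTE ->; rewrite mulr0.
Qed.

Section Coordinates.
Variables (F : fieldType) (n : nat).
Implicit Types (x y : 'rV[F]_n.+1) (v : 'rV[F]_n).
Local Notation e0 := (ebas (ord0 : 'I_n.+1) : 'rV[F]_n.+1).

Definition Umx : 'M[F]_(n, n.+1) := \matrix_(i < n) ebas (lift ord0 i).

Definition tail x : 'rV[F]_n := x *m Umx^T.

Lemma UmxE i j : Umx i j = (lift ord0 i == j)%:R.
Proof. by rewrite mxE ebasE. Qed.

Lemma tailE x j : tail x 0 j = x 0 (lift ord0 j).
Proof.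
rewrite mxE -[RHS](sum_delta (x 0)); apply: eq_bigr => i _.
by rewrite mxE UmxE eq_sym.
Qed.

Lemma mulUmx_lift v j : (v *m Umx) 0 (lift ord0 j) = v 0 j.
Proof.
rewrite mxE -[RHS](sum_delta (v 0)); apply: eq_bigr => i _.
by rewrite UmxE (inj_eq lift_inj).
Qed.

Lemma mulUmx0 v : (v *m Umx) 0 ord0 = 0.
Proof.
by rewrite mxE big1 // => i _; rewrite UmxE eq_sym (negbTE (neq_lift _ _)) mulr0.
Qed.

Lemma tailB x y : tail (x - y) = tail x - tail y.
Proof. exact: mulmxBl. Qed.

Lemma tailZ a x : tail (a *: x) = a *: tail x.
Proof. by rewrite /tail scalemxAl. Qed.

Lemma tail_mulUmx v : tail (v *m Umx) = v.
Proof. by apply/rowP => j; rewrite tailE mulUmx_lift. Qed.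

Lemma tail_e0 : tail e0 = 0.
Proof. by apply/rowP => j; rewrite tailE ebasE mxE (negbTE (neq_lift _ _)). Qed.

Lemma row_decomp x : x = x 0 ord0 *: e0 + tail x *m Umx.
Proof.
apply/rowP => s; rewrite mxE [X in X + _]mxE ebasE.
case: (unliftP ord0 s) => [s'|] ->.
  by rewrite mulUmx_lift tailE (negbTE (neq_lift _ _)) mulr0 add0r.
by rewrite mulUmx0 eqxx mulr1 addr0.
Qed.

Lemma inU_iff x : inU x <-> x 0 ord0 = 0.
Proof.
split => [/submxP[D ->] | x0]; first exact: mulUmx0.
by rewrite /inU (row_decomp x) x0 scale0r add0r submxMl.
Qed.

Lemma tail_eq0 x : tail x = 0 -> x = x 0 ord0 *: e0.
Proof. by move=> tx0; rewrite {1}(row_decomp x) tx0 mul0mx addr0. Qed.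

Lemma wedge_tail_proportional (w t : 'rV[F]_n.+1) (k : 'I_n) :
  w 0 (lift ord0 k) != 0 ->
  (forall j, wedge w t (lift ord0 j) (lift ord0 k) = 0) ->
  tail t = (t 0 (lift ord0 k) / w 0 (lift ord0 k)) *: tail w.
Proof.
move=> wk0 wt0; apply/rowP => j; rewrite [RHS]mxE !tailE.
have /eqP := wt0 j; rewrite wedgeE subr_eq0 => /eqP wt.
by rewrite mulrAC [_ * w 0 _]mulrC wt mulfK.
Qed.

End Coordinates.
Arguments Umx {F n}.

Section MapF.
Variables (F : fieldType) (n : nat) (b : 'rV[F]_n) (c A : 'M[F]_n).
Implicit Types (x y : 'rV[F]_n.+1) (v : 'rV[F]_n) (g : 'M[F]_n.+1) (j k : 'I_n).
Local Notation e0 := (ebas (ord0 : 'I_n.+1) : 'rV[F]_n.+1).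
Local Notation f := (fmap b c A).
Local Notation fb := (fbasis b c A).

Lemma wedge_e0_lift y j k : wedge e0 y (lift ord0 j) (lift ord0 k) = 0.
Proof. by rewrite wedgeE !ebasE !(negbTE (neq_lift _ _)) !(mul0r, mulr0) subrr. Qed.

Lemma in_v0V_lift (w : 'M[F]_n.+1) j k :
  in_v0V w -> w (lift ord0 j) (lift ord0 k) = 0.
Proof. by case=> y ->; apply: wedge_e0_lift. Qed.

Lemma fbasis_lift j : fb (lift ord0 j) = wedge e0 (row j A *m Umx).
Proof.
rewrite /fbasis liftK mulmx_sum_row wedge_sumr; apply: eq_bigr => k _.
by rewrite rowK wedgeZr mxE.
Qed.

Lemma fmap_decomp x : f x = x 0 ord0 *: fb ord0 + wedge e0 (tail x *m A *m Umx).
Proof.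
rewrite /fmap big_ord_recl; congr (_ + _).
rewrite -mulmxA mulmx_sum_row wedge_sumr; apply: eq_bigr => j _.
by rewrite fbasis_lift row_mul wedgeZr tailE.
Qed.

Lemma fmap_inU x : x 0 ord0 = 0 -> f x = wedge e0 (tail x *m A *m Umx).
Proof. by move=> x0; rewrite fmap_decomp x0 scale0r add0r. Qed.

Lemma fmap_lift x j k :
  f x (lift ord0 j) (lift ord0 k) = x 0 ord0 * fb ord0 (lift ord0 j) (lift ord0 k).
Proof. by rewrite fmap_decomp mxE wedge_e0_lift addr0 mxE. Qed.

Lemma fbasis0_lift j k : (j < k)%N -> fb ord0 (lift ord0 j) (lift ord0 k) = c j k.
Proof.
move=> ljk; rewrite /fbasis unlift_none mxE summxE big1 ?add0r; last first.
  by move=> i _; rewrite mxE wedge_e0_lift mulr0.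
rewrite summxE; under eq_bigr do rewrite summxE.
rewrite pair_big_dep /= (bigD1 (j, k)) ?ljk //= big1 ?addr0 => [|[j' k'] /=].
  have ne_kj : (k == j) = false by rewrite -val_eqE /= gtn_eqF.
  rewrite mxE wedgeE !ebasE !(inj_eq lift_inj) !eqxx ne_kj.
  by rewrite !mul1r mul0r subr0 mulr1.
move=> /andP[lj'k' ne]; rewrite xpair_eqE in ne.
rewrite mxE wedgeE !ebasE !(inj_eq lift_inj).
have no_swap : ((k' == j) && (j' == k)) = false.
  apply/negbTE/andP => -[/eqP kj /eqP jk].
  by move: lj'k'; rewrite kj jk ltnNge (ltnW ljk).
by rewrite -!natrM !mulnb no_swap (negbTE ne) subrr mulr0.
Qed.

Lemma inG_invmx g : inG b c A g -> inG b c A (invmx g).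
Proof.
case=> gu fg; split => [|v]; first by rewrite unitmx_inv.
rewrite -{2}(mulmxKV gu v) fg /hat !mulmxA -trmx_mul mulmxV // trmx1 mul1mx.
by rewrite -mulmxA mulmxV // mulmx1.
Qed.

Hypothesis c_strictly_upper : forall j k, ~~ (j < k)%N -> c j k = 0.
Hypothesis c_neq0 : c != 0.

Lemma inU_fmapP x : inU x <-> in_v0V (f x).
Proof.
rewrite inU_iff; split => [x0 | fx].
  by exists (tail x *m A *m Umx); apply: fmap_inU.
have [j [k cjk]] := mx_neq0_entry c_neq0.
have ljk : (j < k)%N by apply: contraNT cjk => /c_strictly_upper ->.
have /eqP := in_v0V_lift j k fx.
by rewrite fmap_lift fbasis0_lift // mulf_eq0 (negbTE cjk) orbF => /eqP.
Qed.

Hypothesis A_unit : A \in unitmx.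
Hypothesis n_ge3 : (3 <= n)%N.

Lemma inG_kernel_image g v : inG b c A g -> tail (e0 *m g) != 0 ->
  (v *m Umx *m g) 0 ord0 = 0 -> (v *m A <= tail (e0 *m invmx g))%MS.
Proof.
case=> gu fg w_neq0 ug0; set w := e0 *m g; set t := v *m A *m Umx *m g.
have [i [k]] := mx_neq0_entry w_neq0; rewrite ord1 tailE => wk.
have fug : f (v *m Umx *m g) = wedge w t.
  by rewrite fg (fmap_inU (mulUmx0 v)) tail_mulUmx hat_wedge.
have wt0 j : wedge w t (lift ord0 j) (lift ord0 k) = 0.
  by rewrite -fug fmap_lift ug0 mul0r.
have prop := wedge_tail_proportional wk wt0.
set lam := _ / _ in prop; set d := v *m A *m Umx - lam *: e0.
have /tail_eq0 dg : tail (d *m g) = 0.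
  by rewrite mulmxBl -scalemxAl tailB tailZ -/t -/w prop subrr.
have tail_d : tail d = v *m A.
  by rewrite tailB tailZ tail_e0 scaler0 subr0 tail_mulUmx.
by rewrite -tail_d -(mulmxK gu d) dg -scalemxAl tailZ scalemx_sub.
Qed.

Lemma inG_fixes_e0_line g : inG b c A g -> tail (e0 *m g) = 0.
Proof.
move=> Gg; apply/eqP; apply: contraT => w_neq0.
pose gam := col ord0 (Umx *m g).
have ker_entry (x : 'rV[F]_n) : x *m gam = 0 -> (x *m Umx *m g) 0 ord0 = 0.
  by move/rowP/(_ 0); rewrite /gam colE !mulmxA -colE mxE [RHS]mxE.
have sub : (kermx gam *m A <= tail (e0 *m invmx g))%MS.
  apply/row_subP => i; rewrite row_mul; apply: inG_kernel_image => //.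
  by apply: ker_entry; rewrite -row_mul mulmx_ker row0.
have := mxrankS sub; rewrite mxrankMfree ?row_free_unit // mxrank_ker.
have := rank_leq_row (tail (e0 *m invmx g)); have := rank_leq_col gam.
by move: n_ge3; clear; lia.
Qed.

Lemma inG_stabilizes_U g x : inG b c A g -> x 0 ord0 = 0 -> (x *m g) 0 ord0 = 0.
Proof.
move=> Gg x0; have eg := tail_eq0 (inG_fixes_e0_line Gg); case: Gg => _ fg.
apply/inU_iff/inU_fmapP; exists ((e0 *m g) 0 ord0 *: (tail x *m A *m Umx *m g)).
by rewrite fg (fmap_inU x0) hat_wedge {1}eg wedgeZl.
Qed.

End MapF.

Lemma minPoly_coef0_neq0 (F0 : fieldType) (L : fieldExtType F0)
    (K : {subfield L}) (x : L) :
  (2 < size (minPoly K x))%N -> (minPoly K x)`_0 != 0.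
Proof.
move=> size_gt2; apply: contraTneq size_gt2 => coef0_eq0.
have : 'X - 0%:P %| minPoly K x by rewrite dvdp_XsubCl rootE horner_coef0 coef0_eq0.
rewrite polyC0 subr0 => /(minPoly_irr (polyOverX _)) /orP[] /eqp_size.
  by rewrite size_polyX => <-.
by rewrite size_polyX size_poly1.
Qed.

Lemma companionmx_unit (R : fieldType) (q : {poly R}) :
  q \is monic -> q`_0 != 0 -> companionmx q \in unitmx.
Proof.
move=> q_monic; apply: contraR; rewrite unitmxE unitfE negbK => /eqP det0.
by rewrite -(companionmxK q_monic) char_poly_det det0 mulr0.
Qed.

Lemma castmx_unit (R : comUnitRingType) m n (e : m = n) (M : 'M[R]_m) :
  M \in unitmx -> castmx (e, e) M \in unitmx.
Proof. by case: n / e; rewrite castmx_id. Qed.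

Unset Implicit Arguments.

Theorem lemma3p2 (p n : nat) (hp : prime p) (hn : (3 <= n)%N)
  (L : fieldExtType 'F_p) (hdim : \dim {:L} = n)
  (z : L) (hprim : forall y : L, y != 0 -> exists k : nat, y = z ^+ k)
  (q : {poly 'F_p}) (hq : map_poly (in_alg L) q = minPoly 1%VS z)
  (A : 'M['F_p]_n)
  (hA : exists e : (size q).-1 = n, A = castmx (e, e) (companionmx q))
  (b : 'rV['F_p]_n) (hb : b != 0)
  (c : 'M['F_p]_n) (hc_upper : forall j k : 'I_n, ~~ (j < k)%N -> c j k = 0)
  (hc : c != 0) :
  (forall x : 'rV['F_p]_n.+1, inU x <-> in_v0V (fmap b c A x)) /\
  (forall g : 'M['F_p]_n.+1, inG b c A g ->
     forall y : 'rV['F_p]_n.+1, inU y <-> exists2 x, inU x & y = x *m g).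
Proof.
have [e A_def] := hA.
have q_monic : q \is monic by rewrite -(map_monic (in_alg L)) hq monic_minPoly.
have q0 : q`_0 != 0.
  have : (map_poly (in_alg L) q)`_0 != 0.
    rewrite hq; apply: minPoly_coef0_neq0.
    by rewrite -hq size_map_poly (leq_trans _ (leq_pred _)) // e.
  by rewrite coef_map; apply: contraNneq => ->; rewrite raddf0.
have A_unit : A \in unitmx by rewrite A_def castmx_unit ?companionmx_unit.
have stab := inG_stabilizes_U (b := b) hc_upper hc A_unit hn.
split=> [x | g Gg y]; first exact: inU_fmapP.
split=> [/inU_iff y0 | [x /inU_iff x0 ->]].
  exists (y *m invmx g); last by case: Gg => gu _; rewrite mulmxKV.
  by apply/inU_iff; exact: stab _ _ (inG_invmx Gg) y0.
by apply/inU_iff; exact: stab _ _ Gg x0.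
Qed.
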